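(* Let $\mathcal U$ be an update family and let $u^*\in\mathcal S$ be a rational direction with $\alpha^-(u^* )=\infty$. Then there exists $u_0\in S^1\setminus\{u^*\}$ such that the closed arc $[u_0,u^*]$ (the short arc between them) is contained in $\mathcal S$, $\alpha^-(u)=\infty$ for all rational $u\in[u_0,u^*]$, and for every $u\in[u_0,u^*]$ and all $a,b\in\mathbb Z^2$ for which $$J=\big(\mathbb H_{u_0}(a)\cap\mathbb H_{u^*}(b)\big)\setminus\mathbb H_u$$ is non-empty, the set $\mathbb H_u\cup J$ is closed, i.e. $[\mathbb H_u\cup J]=\mathbb H_u\cup J$.
   Context: Update family $\mathcal U$: finite collection of finite subsets of $\mathbb Z^2\setminus\{0\}$; $A_{t+1}=A_t\cup\{x:x+X\subset A_t,\ X\in\mathcal U\}$, $[A]=\bigcup_tA_t$. $\mathbb H_u(a)=\{x\in\mathbb Z^2:\langle x-a,u\rangle<0\}$, $\mathbb H_u=\mathbb H_u(0)$; $u$ stable if $[\mathbb H_u]=\mathbb H_u$, $\mathcal S$ the stable set. For rational $u$ (rational or infinite slope), $\ell_u^-$ is the origin together with the sites of $\{x:\langle x,u\rangle=0\}$ to the left of the origin looking in direction $u$, and $\alpha^-(u)$ is the minimal cardinality of $Z\subset\mathbb Z^2$ such that $[\mathbb H_u\cup Z]$ contains infinitely many sites of $\ell_u^-$ ($\infty$ if none exists). A set of the form $J$ above is called a $u$-iceberg. *)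

From Stdlib Require Export Reals ZArith List.
Open Scope R_scope.

Definition site := (Z * Z)%type.
Definition vec := (R * R)%type.
Definition siteset := site -> Prop.

Definition update_family := list (list site).
Definition valid_family (U : update_family) : Prop :=
  forall X, In X U -> ~ In (0%Z, 0%Z) X.

Definition sadd (x y : site) : site := ((fst x + fst y)%Z, (snd x + snd y)%Z).

Fixpoint step_iter (U : update_family) (A : siteset) (t : nat) : siteset :=
  match t with
  | O => A
  | S t' => fun x => step_iter U A t' x \/
             exists X, In X U /\ forall y, In y X -> step_iter U A t' (sadd x y)
  end.

Definition closure (U : update_family) (A : siteset) : siteset :=
  fun x => exists t, step_iter U A t x.

Definition set_eq (A B : siteset) : Prop := forall x, A x <-> B x.
Definition union (A B : siteset) : siteset := fun x => A x \/ B x.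

Definition ip (x : site) (u : vec) : R := IZR (fst x) * fst u + IZR (snd x) * snd u.

Definition ssub (x a : site) : site := ((fst x - fst a)%Z, (snd x - snd a)%Z).

Definition Hua (u : vec) (a : site) : siteset := fun x => ip (ssub x a) u < 0.
Definition Hu (u : vec) : siteset := Hua u (0%Z, 0%Z).

Definition unit_vec (u : vec) : Prop := fst u * fst u + snd u * snd u = 1.

Definition stable (U : update_family) (u : vec) : Prop :=
  set_eq (closure U (Hu u)) (Hu u).

(* rational direction: unit vector with rational or infinite slope,
   i.e. parallel to a nonzero integer vector *)
Definition rational_dir (u : vec) : Prop :=
  unit_vec u /\ exists p q : Z, (p <> 0%Z \/ q <> 0%Z) /\
     fst u * IZR q = snd u * IZR p.

(* ℓ_u^- : origin together with the sites of {<x,u> = 0} to the left of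
   the origin looking in direction u, i.e. in direction (-u2, u1). *)
Definition ell_minus (u : vec) : siteset :=
  fun x => ip x u = 0 /\ ip x (- snd u, fst u) >= 0.

Definition finite_set (A : siteset) : Prop :=
  exists L : list site, forall x, A x -> In x L.

(* α^-(u) = ∞ : no finite Z ⊂ Z^2 makes [H_u ∪ Z] contain infinitely many
   sites of ℓ_u^- *)
Definition alpha_minus_infinite (U : update_family) (u : vec) : Prop :=
  forall Z : list site,
    finite_set (fun x => closure U (union (Hu u) (fun y => In y Z)) x /\ ell_minus u x).

(* closed short arc [u0, u1] between unit vectors u0, u1 with u0 <> -u1 *)
Definition in_arc (u0 u1 u : vec) : Prop :=
  unit_vec u /\ exists s t, 0 <= s /\ 0 <= t /\
    fst u = s * fst u0 + t * fst u1 /\ snd u = s * snd u0 + t * snd u1.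

From Stdlib Require Import Reals ZArith List Lra Lia Classical.
Open Scope R_scope.

(* Write w = rot90 u*. Since alpha^- is infinite at u*, every rule X of U contains a
   site y which is lexicographically positive for the pair u*, w: <y,u*> > 0, or <y,u*> = 0
   and <y,w> > 0. Otherwise every site of X lies in H_{u*} or strictly behind on the
   line <.,u*> = 0, and X alone infects the whole ray ell^-_{u*} from a finite seed.
   Tilting u* slightly towards w gives u0 such that these finitely many witnesses
   have <y,u*> >= 0 and <y,u0> > 0, hence <y,u> >= 0 on the whole arc and <y,u> > 0
   for u <> u*. A rule containing a site y with <y,v> >= 0 cannot infect a site
   outside a half-plane H_v(a); this makes H_u and H_u ∪ J closed. When moreover
   <y,u> > 0, each infection outside H_u gains a fixed amount in the direction u,
   so from a finite seed only finitely many sites with <x,u> >= 0 are reached. *)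

Definition rot90 (u : vec) : vec := (- snd u, fst u).

Definition lex_pos (u : vec) (y : site) : Prop :=
  0 < ip y u \/ (ip y u = 0 /\ 0 < ip y (rot90 u)).

Definition rules_meet (U : update_family) (P : site -> Prop) : Prop :=
  forall X, In X U -> exists y, In y X /\ P y.

Definition closed (U : update_family) (K : siteset) : Prop :=
  forall x X, In X U -> (forall y, In y X -> K (sadd x y)) -> K x.

Lemma rules_meet_impl U (P Q : site -> Prop) :
  (forall y, P y -> Q y) -> rules_meet U P -> rules_meet U Q.
Proof.
  intros HPQ H X HX. destruct (H X HX) as [y [Hy HP]]. exists y; auto.
Qed.

Lemma ip_sadd x y u : ip (sadd x y) u = ip x u + ip y u.
Proof. unfold ip, sadd; simpl; rewrite !plus_IZR; ring. Qed.

Lemma ip_ssub x y u : ip (ssub x y) u = ip x u - ip y u.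
Proof. unfold ip, ssub; simpl; rewrite !minus_IZR; ring. Qed.

Lemma Hu_ip u x : Hu u x <-> ip x u < 0.
Proof. unfold Hu, Hua; rewrite ip_ssub; unfold ip at 2; simpl; split; lra. Qed.

Lemma Hua_sadd v a x y : 0 <= ip y v -> Hua v a (sadd x y) -> Hua v a x.
Proof. unfold Hua; rewrite !ip_ssub, ip_sadd; lra. Qed.

Lemma site_coords u x : unit_vec u ->
  IZR (fst x) = ip x u * fst u - ip x (rot90 u) * snd u /\
  IZR (snd x) = ip x u * snd u + ip x (rot90 u) * fst u.
Proof.
  unfold unit_vec, ip, rot90; simpl; intro Hunit.
  split; [transitivity (IZR (fst x) * (fst u * fst u + snd u * snd u))
         |transitivity (IZR (snd x) * (fst u * fst u + snd u * snd u))];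
    [rewrite Hunit; ring|ring|rewrite Hunit; ring|ring].
Qed.

Lemma step_iter_mono U A t t' x :
  (t <= t')%nat -> step_iter U A t x -> step_iter U A t' x.
Proof. induction 1; simpl; auto. Qed.

Lemma closure_incl U A x : A x -> closure U A x.
Proof. now exists O. Qed.

Lemma closure_step U A X x :
  In X U -> (forall y, In y X -> closure U A (sadd x y)) -> closure U A x.
Proof.
  intros HX H.
  assert (HT : exists T, forall y, In y X -> step_iter U A T (sadd x y)).
  { clear HX. induction X as [|y0 X IH].
    - exists O; intros y [].
    - destruct (H y0 (or_introl eq_refl)) as [t0 H0].
      destruct IH as [T HT]; [intros y Hy; apply H; now right|].
      exists (Nat.max t0 T). intros y [<-|Hy].
      + apply step_iter_mono with t0; [lia|exact H0].
      + apply step_iter_mono with T; [lia|auto]. }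
  destruct HT as [T HT]. exists (S T). simpl. right. now exists X.
Qed.

Lemma closure_ind U A (K : siteset) :
  (forall x, A x -> K x) -> closed U K -> forall x, closure U A x -> K x.
Proof.
  intros HA HK x [t Ht]. revert x Ht.
  induction t as [|t IH]; simpl; intros x Ht; auto.
  destruct Ht as [Ht|[X [HX Hy]]]; eauto.
Qed.

Lemma closure_closed U K : closed U K -> set_eq (closure U K) K.
Proof. intros HK x; split; [apply closure_ind; auto|apply closure_incl]. Qed.

Lemma closed_of_backward U K :
  rules_meet U (fun y => forall x, K (sadd x y) -> K x) -> closed U K.
Proof. intros H x X HX HK. destruct (H X HX) as [y [Hy Hback]]. auto. Qed.

Lemma stable_of_rules_meet U u :
  rules_meet U (fun y => 0 <= ip y u) -> stable U u.
Proof.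
  intro H. apply closure_closed, closed_of_backward.
  revert H; apply rules_meet_impl. intros y Hy x. now apply Hua_sadd.
Qed.

Lemma iceberg_closed U u0 us u a b :
  rules_meet U (fun y => 0 <= ip y u0 /\ 0 <= ip y us /\ 0 <= ip y u) ->
  closed U (union (Hu u) (fun x => Hua u0 a x /\ Hua us b x /\ ~ Hu u x)).
Proof.
  intro H. apply closed_of_backward. revert H; apply rules_meet_impl.
  intros y [H0 [Hs Hu0]] x [Hx|[Ha [Hb _]]].
  - left; exact (Hua_sadd _ _ _ _ Hu0 Hx).
  - destruct (classic (Hu u x)) as [Hx|Hx]; [now left|right].
    split; [|split]; eauto using Hua_sadd.
Qed.

Lemma list_bound {A : Type} (L : list A) (f : A -> R) :
  exists M, 0 <= M /\ forall y, In y L -> - M <= f y <= M.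
Proof.
  induction L as [|a L [M [HM0 HM]]]; [exists 0; split; [lra|intros y []]|].
  exists (Rmax (Rabs (f a)) M). pose proof (Rmax_r (Rabs (f a)) M).
  split; [lra|]. intros y [<-|Hy].
  - pose proof (Rmax_l (Rabs (f a)) M). split_Rabs; lra.
  - specialize (HM y Hy). lra.
Qed.

Lemma list_min_pos {A : Type} (L : list A) (f : A -> R) :
  exists m, 0 < m /\ forall y, In y L -> 0 < f y -> m <= f y.
Proof.
  induction L as [|a L [m [Hm H]]]; [exists 1; split; [lra|intros y []]|].
  destruct (Rlt_dec 0 (f a)).
  - exists (Rmin (f a) m). split; [now apply Rmin_pos|].
    intros y [<-|Hy] Hp; [apply Rmin_l|].
    apply Rle_trans with m; [apply Rmin_r|auto].
  - exists m. split; auto. intros y [<-|Hy] Hp; [lra|auto].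
Qed.

Definition pos_sites {A : Type} (f : A -> R) (L : list A) : list A :=
  filter (fun y => if Rlt_dec 0 (f y) then true else false) L.

Lemma in_pos_sites {A : Type} (f : A -> R) L y : In y (pos_sites f L) <-> In y L /\ 0 < f y.
Proof.
  unfold pos_sites; rewrite filter_In.
  destruct (Rlt_dec 0 (f y)); intuition discriminate.
Qed.

Fixpoint ksums (Y : list site) (k : nat) : list site :=
  match k with
  | O => (0%Z, 0%Z) :: nil
  | S k' => flat_map (fun s => map (sadd s) Y) (ksums Y k')
  end.

Lemma closure_nonneg_ksums U u (Zl Y : list site) d : 0 <= d ->
  (forall y, In y Y -> d <= ip y u) -> rules_meet U (fun y => In y Y) ->
  forall x, closure U (union (Hu u) (fun z => In z Zl)) x -> 0 <= ip x u ->
  exists k z s, In z Zl /\ In s (ksums Y k) /\ x = ssub z s /\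
                ip x u + INR k * d <= ip z u.
Proof.
  intros Hd HY HUY. refine (closure_ind _ _ _ _ _).
  - intros x [Hx|Hx] Hpos; [rewrite Hu_ip in Hx; exfalso; lra|].
    exists O, x, (0%Z, 0%Z). simpl. repeat split; auto.
    + destruct x; unfold ssub; simpl; f_equal; lia.
    + lra.
  - intros x X HX IH Hpos.
    destruct (HUY X HX) as [y [HyX HyY]]. specialize (HY y HyY).
    destruct (IH y HyX) as [k [z [s [Hz [Hs [Hxe Hb]]]]]]; [rewrite ip_sadd; lra|].
    exists (S k), z, (sadd s y). repeat split; auto.
    + simpl. apply in_flat_map. exists s. split; auto. now apply in_map.
    + destruct x, y, z, s; unfold sadd, ssub in *; simpl in *.
      injection Hxe as E1 E2. f_equal; lia.
    + rewrite ip_sadd in Hb. rewrite S_INR. lra.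
Qed.

Lemma alpha_minus_infinite_of_pos U u :
  rules_meet U (fun y => 0 < ip y u) -> alpha_minus_infinite U u.
Proof.
  intros HU Zl.
  set (f := fun y => ip y u).
  set (Y := pos_sites f (concat U)).
  destruct (list_min_pos (concat U) f) as [d [Hd Hdmin]].
  assert (HY : forall y, In y Y -> d <= ip y u).
  { intros y Hy. apply in_pos_sites in Hy as [Hy Hpos]. now apply Hdmin. }
  assert (HUY : rules_meet U (fun y => In y Y)).
  { intros X HX. destruct (HU X HX) as [y [Hy Hpos]]. exists y.
    split; auto. apply in_pos_sites. split; [apply in_concat; eauto|exact Hpos]. }
  destruct (list_bound Zl f) as [M [_ HM]].
  destruct (INR_unbounded (M / d)) as [K HK].
  exists (flat_map (fun k => flat_map (fun z => map (ssub z) (ksums Y k)) Zl)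
                   (seq 0 (S K))).
  intros x [Hx [He _]].
  destruct (closure_nonneg_ksums U u Zl Y d (Rlt_le _ _ Hd) HY HUY x Hx (Req_le_sym _ _ He))
    as [k [z [s [Hz [Hs [-> Hb]]]]]].
  apply in_flat_map. exists k. split.
  - apply in_seq. split; [lia|].
    destruct (le_lt_dec k K) as [Hk|Hk]; [lia|exfalso].
    apply lt_INR in Hk. specialize (HM z Hz). unfold f in HM.
    assert (M < INR K * d).
    { apply (Rmult_lt_compat_r d) in HK; auto.
      unfold Rdiv in HK. rewrite Rmult_assoc, Rinv_l in HK; lra. }
    assert (INR K * d < INR k * d) by (apply Rmult_lt_compat_r; auto).
    lra.
  - apply in_flat_map. exists z. split; auto. now apply in_map.
Qed.

Lemma site_eq0 u y :
  unit_vec u -> ip y u = 0 -> ip y (rot90 u) = 0 -> y = (0%Z, 0%Z).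
Proof.
  intros Hunit H1 H2. destruct (site_coords u y Hunit) as [E1 E2].
  rewrite H1, H2 in E1, E2. destruct y as [y1 y2]; simpl in *.
  assert (Z1 : IZR y1 = IZR 0) by (rewrite E1; simpl; ring).
  assert (Z2 : IZR y2 = IZR 0) by (rewrite E2; simpl; ring).
  apply eq_IZR in Z1, Z2. now subst.
Qed.

Definition zrange (N : Z) : list Z :=
  map (fun k => Z.of_nat k - N)%Z (seq 0 (Z.to_nat (2 * N + 1))).

Definition box (N : Z) : list site := list_prod (zrange N) (zrange N).

Lemma in_zrange N i : - IZR N <= IZR i <= IZR N -> In i (zrange N).
Proof.
  rewrite <- opp_IZR. intros [H1 H2]. apply le_IZR in H1, H2.
  apply in_map_iff. exists (Z.to_nat (i + N)). split.
  - rewrite Z2Nat.id; lia.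
  - apply in_seq. lia.
Qed.

Lemma in_box N x :
  - IZR N <= IZR (fst x) <= IZR N -> - IZR N <= IZR (snd x) <= IZR N ->
  In x (box N).
Proof. destruct x; intros; apply in_prod; now apply in_zrange. Qed.

Lemma ell_minus_in_closure U u X :
  unit_vec u -> In X U ->
  (forall y, In y X -> ip y u < 0 \/ (ip y u = 0 /\ ip y (rot90 u) < 0)) ->
  exists N, forall x, ell_minus u x ->
    closure U (union (Hu u) (fun z => In z (box N))) x.
Proof.
  intros Hunit HX Hback. set (w := rot90 u).
  destruct (list_bound X (fun y => ip y w)) as [R [HR0 HR]].
  destruct (list_min_pos X (fun y => - ip y w)) as [m [Hm Hmin]].
  set (N := up R). assert (HN : R < IZR N) by apply archimed.
  exists N.
  assert (Hu12 : -1 <= fst u <= 1 /\ -1 <= snd u <= 1)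
    by (unfold unit_vec in Hunit; split; split; nra).
  (* induction on how far along the line the site lies, in steps of m *)
  assert (Hfill : forall (n : nat) x, ip x u = 0 -> - R <= ip x w < INR n * m ->
            closure U (union (Hu u) (fun z => In z (box N))) x).
  { induction n as [|n IH]; intros x Hx Hxw.
    - apply closure_incl. right. rewrite Rmult_0_l in Hxw.
      destruct (site_coords u x Hunit) as [E1 E2]. fold w in E1, E2.
      rewrite Hx in E1, E2. apply in_box; rewrite ?E1, ?E2; nra.
    - destruct (Rlt_dec (ip x w) (INR n * m)) as [Hlt|Hge]; [apply IH; lra|].
      assert (0 <= INR n * m) by (apply Rmult_le_pos; [apply pos_INR|lra]).
      rewrite S_INR, Rmult_plus_distr_r, Rmult_1_l in Hxw.
      apply closure_step with X; auto. intros y Hy.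
      specialize (HR y Hy). cbv beta in HR.
      destruct (Hback y Hy) as [Hneg|[H0 Hyw]].
      + apply closure_incl. left. rewrite Hu_ip, ip_sadd. lra.
      + specialize (Hmin y Hy). cbv beta in Hmin.
        apply IH; rewrite !ip_sadd; [lra|]. split; [lra|].
        fold w in Hyw. assert (m <= - ip y w) by (apply Hmin; lra). lra. }
  intros x [Hx Hxw]. change (ip x w >= 0) in Hxw.
  destruct (INR_unbounded (ip x w / m)) as [n Hn].
  apply (Hfill n x Hx). split; [lra|].
  apply (Rmult_lt_compat_r m) in Hn; auto.
  unfold Rdiv in Hn. rewrite Rmult_assoc, Rinv_l in Hn; lra.
Qed.

Lemma finite_set_bounded (A : siteset) : finite_set A ->
  exists B, forall x, A x -> (Z.abs (fst x) + Z.abs (snd x) <= B)%Z.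
Proof.
  intros [L HL].
  enough (HB : exists B, forall x, In x L -> (Z.abs (fst x) + Z.abs (snd x) <= B)%Z)
    by (destruct HB as [B HB]; exists B; auto).
  clear HL. induction L as [|a L [B HB]]; [exists 0%Z; intros x []|].
  exists (Z.max (Z.abs (fst a) + Z.abs (snd a)) B).
  intros x [<-|Hx]; [lia|]. specialize (HB x Hx). lia.
Qed.

Lemma rational_dir_line u :
  rational_dir u -> exists d, ip d u = 0 /\ 0 < ip d (rot90 u).
Proof.
  intros [Hunit [p [q [Hpq Heq]]]].
  assert (Hd0 : ip ((- q)%Z, p) u = 0) by (unfold ip; simpl; rewrite opp_IZR; lra).
  destruct (Rtotal_order (ip ((- q)%Z, p) (rot90 u)) 0) as [Hneg|[Hz|Hpos]].
  - exists (q, (- p)%Z). revert Hd0 Hneg. unfold ip; simpl; rewrite !opp_IZR. lra.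
  - pose proof (site_eq0 u _ Hunit Hd0 Hz) as E. injection E; lia.
  - eauto.
Qed.

Lemma ell_minus_not_finite u : rational_dir u -> ~ finite_set (ell_minus u).
Proof.
  intros Hrat Hfin.
  destruct (rational_dir_line u Hrat) as [d [Hd0 Hdw]].
  destruct (finite_set_bounded _ Hfin) as [B HB].
  assert (Hd : (1 <= Z.abs (fst d) + Z.abs (snd d))%Z).
  { destruct d as [d1 d2]; simpl.
    destruct (Z.eq_dec d1 0), (Z.eq_dec d2 0); try lia. subst.
    unfold ip in Hdw; simpl in Hdw. lra. }
  set (k := (Z.abs B + 1)%Z).
  assert (Hk : 0 < IZR k) by (apply IZR_lt; lia).
  assert (HP : forall v, ip ((k * fst d)%Z, (k * snd d)%Z) v = IZR k * ip d v)
    by (intro v; unfold ip; simpl; rewrite !mult_IZR; ring).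
  specialize (HB ((k * fst d)%Z, (k * snd d)%Z)). simpl in HB.
  rewrite !Z.abs_mul in HB.
  enough (Z.abs k * Z.abs (fst d) + Z.abs k * Z.abs (snd d) <= B)%Z by nia.
  apply HB. unfold ell_minus. rewrite !HP. change (- snd u, fst u) with (rot90 u).
  split; [rewrite Hd0; ring|nra].
Qed.

Lemma rules_meet_lex_pos U u :
  valid_family U -> rational_dir u -> alpha_minus_infinite U u ->
  rules_meet U (lex_pos u).
Proof.
  intros Hval Hrat Halpha X HX. pose proof (proj1 Hrat) as Hunit.
  apply NNPP; intro Hnone.
  assert (Hback : forall y, In y X ->
            ip y u < 0 \/ (ip y u = 0 /\ ip y (rot90 u) < 0)).
  { intros y Hy. assert (Hy' : ~ lex_pos u y) by (intro; apply Hnone; eauto).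
    unfold lex_pos in Hy'.
    destruct (Rtotal_order (ip y u) 0) as [H1|[H1|H1]]; [now left| |tauto].
    right; split; auto.
    destruct (Rtotal_order (ip y (rot90 u)) 0) as [H2|[H2|H2]]; [auto| |tauto].
    exfalso. apply (Hval X HX). now rewrite <- (site_eq0 u y Hunit H1 H2). }
  destruct (ell_minus_in_closure U u X Hunit HX Hback) as [N HN].
  apply (ell_minus_not_finite u Hrat).
  destruct (Halpha (box N)) as [L HL]. exists L. auto.
Qed.

Definition tilt (a b : R) (u : vec) : vec :=
  (a * fst u - b * snd u, a * snd u + b * fst u).

Lemma ip_tilt a b u y : ip y (tilt a b u) = a * ip y u + b * ip y (rot90 u).
Proof. unfold ip, tilt, rot90; simpl; ring. Qed.

Lemma tilt_lex_pos (Y : list site) u : unit_vec u ->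
  exists u0, unit_vec u0 /\ u0 <> u /\ (fst u0 + fst u, snd u0 + snd u) <> (0, 0) /\
    forall y, In y Y -> lex_pos u y -> 0 < ip y u0.
Proof.
  intro Hunit.
  destruct (list_bound Y (fun y => ip y (rot90 u))) as [R [HR0 HR]].
  destruct (list_min_pos Y (fun y => ip y u)) as [m [Hm Hmin]].
  (* b is chosen so that b * R < m / 2 <= a * m *)
  set (b := m / (2 * (R + m + 1))).
  assert (Hb : b * (2 * (R + m + 1)) = m) by (unfold b; field; lra).
  assert (Hbpos : 0 < b) by (unfold b; apply Rdiv_lt_0_compat; lra).
  assert (Hbhalf : b <= 1 / 2) by nra.
  set (a := sqrt (1 - b * b)).
  assert (Ha2 : a * a = 1 - b * b) by (unfold a; apply sqrt_sqrt; nra).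
  assert (Ha : 1 / 2 <= a) by (assert (0 <= a) by apply sqrt_pos; nra).
  exists (tilt a b u). unfold unit_vec in *. destruct u as [u1 u2]; simpl in *.
  split; [|split; [|split]].
  - transitivity ((a * a + b * b) * (u1 * u1 + u2 * u2)); [ring|].
    rewrite Hunit, Ha2; ring.
  - intro E. injection E as E1 E2.
    assert (Eb : b * (u1 * u1 + u2 * u2) =
                 - u2 * (a * u1 - b * u2) + u1 * (a * u2 + b * u1)) by ring.
    rewrite E1, E2, Hunit in Eb. lra.
  - intro E. injection E as E1 E2.
    assert (Ea : (a + 1) * (u1 * u1 + u2 * u2) =
                 u1 * (a * u1 - b * u2 + u1) + u2 * (a * u2 + b * u1 + u2)) by ring.
    rewrite E1, E2, Hunit in Ea. lra.
  - intros y Hy Hlex. rewrite ip_tilt.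
    specialize (HR y Hy). cbv beta in HR.
    destruct Hlex as [Hpos|[H0 Hw]]; [|rewrite H0; nra].
    specialize (Hmin y Hy Hpos). cbv beta in Hmin. nra.
Qed.

Lemma in_arc_ip_nonneg u0 us u y :
  in_arc u0 us u -> 0 <= ip y u0 -> 0 <= ip y us -> 0 <= ip y u.
Proof.
  intros [_ [s [t [Hs [Ht [E1 E2]]]]]] H0 H1.
  replace (ip y u) with (s * ip y u0 + t * ip y us) by (unfold ip; rewrite E1, E2; ring).
  nra.
Qed.

Lemma in_arc_ip_pos u0 us u y : unit_vec us -> in_arc u0 us u -> u <> us ->
  0 < ip y u0 -> 0 <= ip y us -> 0 < ip y u.
Proof.
  intros Hus [Hunit [s [t [Hs [Ht [E1 E2]]]]]] Hne H0 H1.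
  destruct (Req_dec s 0) as [->|Hs0].
  - exfalso. apply Hne. unfold unit_vec in Hunit, Hus.
    assert (Htt : t * t = 1).
    { transitivity (t * t * (fst us * fst us + snd us * snd us)); [rewrite Hus; ring|].
      rewrite <- Hunit, E1, E2; ring. }
    assert (t = 1) by nra. subst t.
    destruct u, us; simpl in *; f_equal; lra.
  - replace (ip y u) with (s * ip y u0 + t * ip y us)
      by (unfold ip; rewrite E1, E2; ring).
    nra.
Qed.

Theorem mainTheorem13 (U : update_family) (ustar : vec) :
  valid_family U ->
  rational_dir ustar ->
  stable U ustar ->
  alpha_minus_infinite U ustar ->
  exists u0 : vec,
    unit_vec u0 /\ u0 <> ustar /\
    (* the short arc is well defined *)
    (fst u0 + fst ustar, snd u0 + snd ustar) <> (0, 0) /\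
    (forall u, in_arc u0 ustar u -> stable U u) /\
    (forall u, in_arc u0 ustar u -> rational_dir u -> alpha_minus_infinite U u) /\
    (forall u, in_arc u0 ustar u ->
       forall a b : site,
         let J := fun x => Hua u0 a x /\ Hua ustar b x /\ ~ Hu u x in
         (exists x, J x) ->
         set_eq (closure U (union (Hu u) J)) (union (Hu u) J)).
Proof.
  intros Hval Hrat _ Halpha. pose proof (proj1 Hrat) as Hunit.
  pose proof (rules_meet_lex_pos U ustar Hval Hrat Halpha) as Hlex.
  destruct (tilt_lex_pos (concat U) ustar Hunit) as [u0 [Hu0 [Hne [Hsum Hpos]]]].
  assert (W : rules_meet U (fun y => 0 <= ip y ustar /\ 0 < ip y u0)).
  { intros X HX. destruct (Hlex X HX) as [y [Hy Hy_lex]].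
    exists y. split; [exact Hy|]. split.
    - destruct Hy_lex as [|[-> _]]; lra.
    - apply Hpos; [apply in_concat; eauto|exact Hy_lex]. }
  exists u0. split; [|split; [|split; [|split; [|split]]]]; auto.
  - intros u Harc. apply stable_of_rules_meet.
    revert W; apply rules_meet_impl. intros y [Hs H0].
    apply (in_arc_ip_nonneg u0 ustar u y Harc); lra.
  - intros u Harc _. destruct (classic (u = ustar)) as [->|Hu_ne]; [exact Halpha|].
    apply alpha_minus_infinite_of_pos.
    revert W; apply rules_meet_impl. intros y [Hs H0].
    exact (in_arc_ip_pos u0 ustar u y Hunit Harc Hu_ne H0 Hs).
  - intros u Harc a b J _. apply closure_closed, iceberg_closed.
    revert W; apply rules_meet_impl. intros y [Hs H0].
    repeat split; try lra. apply (in_arc_ip_nonneg u0 ustar u y Harc); lra.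
Qed.
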